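(* Let $g$ be a positive integer. Then there exists $c=c(g)>0$ such that for every integer $n\geq 3$ there exist a set of $n$ points and a set of $n$ open axis-parallel rectangles in $\mathbb{R}^2$ whose incidence graph $G$ has girth at least $g$ and at least $c\,n\log\log n$ edges.
   Context: An open axis-parallel rectangle is a set $(a,c)\times(b,d)\subset\mathbb{R}^2$. The incidence graph of a set $P$ of points and a set $\mathcal{R}$ of rectangles is the bipartite graph with vertex classes $P$ and $\mathcal{R}$, where $p\in P$ and $R\in\mathcal{R}$ are adjacent iff $p\in R$. The girth of a graph is the length of its shortest cycle. *)

From Stdlib Require Import Reals.
From mathcomp Require Import all_boot.
Set Implicit Arguments. Unset Strict Implicit. Unset Printing Implicit Defensive.

Open Scope R_scope.

Definition point := (R * R)%type.

(* An open axis-parallel rectangle (a,c) x (b,d) is given by (a, c, b, d). *)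
Definition rectangle := (R * R * R * R)%type.

Definition in_rect (p : point) (r : rectangle) : Prop :=
  let '(a, c, b, d) := r in a < fst p < c /\ b < snd p < d.

Definition Rltb (x y : R) : bool := if Rlt_dec x y then true else false.

Definition in_rectb (p : point) (r : rectangle) : bool :=
  let '(a, c, b, d) := r in
  [&& Rltb a (fst p), Rltb (fst p) c, Rltb b (snd p) & Rltb (snd p) d].

Definition incidence_rel (m k : nat) (P : 'I_m -> point) (Q : 'I_k -> rectangle)
  : rel ('I_m + 'I_k)%type :=
  fun u v => match u, v with
             | inl i, inr j => in_rectb (P i) (Q j)
             | inr j, inl i => in_rectb (P i) (Q j)
             | _, _ => false
             end.

Definition incidence_edges (m k : nat) (P : 'I_m -> point) (Q : 'I_k -> rectangle) : nat :=
  #|[set x : 'I_m * 'I_k | in_rectb (P x.1) (Q x.2)]|.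

(* A cycle of a (simple, symmetric) graph e: a list of >= 3 pairwise distinct
   vertices v_0 ... v_{l-1} with v_i ~ v_{i+1} and v_{l-1} ~ v_0.
   "girth at least g": every cycle has length at least g
   (an acyclic graph has infinite girth). *)
Definition girth_at_least (T : finType) (e : rel T) (g : nat) : Prop :=
  forall s : seq T, uniq s -> (3 <= size s)%N -> cycle e s -> (g <= size s)%N.

Definition distinct_points (n : nat) (P : 'I_n -> point) : Prop :=
  forall i1 i2, P i1 = P i2 -> i1 = i2.

Definition distinct_rects (n : nat) (Q : 'I_n -> rectangle) : Prop :=
  forall j1 j2, (forall p, in_rect p (Q j1) <-> in_rect p (Q j2)) -> j1 = j2.

(* Configurations of integer points and closed integer rectangles are built in
   rounds.  From one with N points take M = N * T translated copies side by
   side, and add for every point p and every level t < T a full-width "band"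
   rectangle; refining the y-coordinates lets each copy of p sit at one chosen
   level, and so lie in the band of that level only.  Which copy joins which band
   is a bipartite graph between copies and bands.  A maximal such graph with at
   most N copies per band and girth at least g is dense: if some copy misses p,
   every band of p with fewer than N copies lies within distance g of that copy,
   a ball of at most (N + 1)^g = T / 2 vertices, so the bands of p carry at least
   N * T / 2 = M / 2 incidences.
   A cycle of the new incidence graph either stays inside one copy, or projects
   to a long closed walk of the copy-band graph; hence the girth stays at least g
   while the incidences per point grow by 1/2 per round.  Since log N grows by a
   factor at most g + 3 per round, about log log n / log (g + 3) rounds fit
   below n, and copies of the last configuration padded with far away points and
   empty rectangles give exactly n of each. *)

From Stdlib Require Import Reals Lra Lia Classical.
From mathcomp Require Import all_boot zify.
Set Implicit Arguments. Unset Strict Implicit. Unset Printing Implicit Defensive.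
Open Scope nat_scope.

Lemma card_bigcup_le (I T : finType) (P : pred I) (F : I -> {set T}) :
  #|\bigcup_(i | P i) F i| <= \sum_(i | P i) #|F i|.
Proof.
elim/big_rec2: _ => [|i A n _ IH]; first by rewrite cards0.
by apply: leq_trans (leq_card_setU _ _) _; rewrite leq_add2l.
Qed.

Lemma card_fibers (X J : finType) (f : X -> J) (S : {set X}) :
  #|S| = \sum_j #|[set x in S | f x == j]|.
Proof.
rewrite -sum1_card (partition_big f xpredT) //=; apply: eq_bigr => j _.
by rewrite -sum1_card; apply: eq_bigl => x; rewrite !inE.
Qed.

Lemma ex_maxcard_set (X : finType) (P : {set X} -> Prop) :
  P set0 -> exists2 A, P A & forall A', P A' -> #|A'| <= #|A|.
Proof.
move=> P0; apply: NNPP => nomax.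
have grow A : P A -> exists2 A', P A' & #|A| < #|A'|.
  move=> PA; apply: NNPP => nobigger; apply: nomax; exists A => // A' PA'.
  by rewrite leqNgt; apply/negP => ltAA'; apply: nobigger; exists A'.
have big n : exists2 A, P A & n <= #|A|.
  elim: n => [|n [A PA leqnA]]; first by exists set0.
  by have [A' PA' ltAA'] := grow A PA; exists A'; last exact: leq_ltn_trans ltAA'.
by have [A _] := big #|X|.+1; rewrite ltnNge max_card.
Qed.

Lemma card_set_sum (X Y : finType) (S : {set X + Y}) :
  #|S| = #|[set x | inl x \in S]| + #|[set y | inr y \in S]|.
Proof. by rewrite -sum1_card (big_sumType _ (mem S)) /= -!sum1dep_card. Qed.

Section BandGraph.
Variables (C B : finType) (G : {set C * B}).

(* A left vertex will stand for a whole copy of a configuration, inside which a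
   closed walk may stay for several steps: hence the loops on the left. *)
Definition band_rel : rel (C + B) := fun x y =>
  match x, y with
  | inl j, inl j' => j == j'
  | inl j, inr b | inr b, inl j => (j, b) \in G
  | inr _, inr _ => false
  end.

Lemma band_rel_sym : symmetric band_rel.
Proof. by case=> [j|b] [j'|b'] //=; rewrite eq_sym. Qed.

(* Closed walks may revisit copies but not bands, and must leave each band
   through another copy than the one they entered by: these are the
   projections of the cycles of the next incidence graph. *)
Definition band_nonbacktracking (w : seq (C + B)) : Prop :=
  forall k b x s, rot k w = inr b :: x :: s -> x != last x s.

Definition band_girth_at_least (g : nat) : Prop :=
  forall w : seq (C + B), 3 <= size w -> cycle band_rel w ->
  (forall b, count_mem (inr b) w <= 1) -> (exists b, inr b \in w) ->
  band_nonbacktracking w -> g <= size w.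

Definition closed_nbhd (x : C + B) : {set C + B} := [set y | (x == y) || band_rel x y].

Fixpoint ball (u : C + B) (n : nat) : {set C + B} :=
  if n is n'.+1 then \bigcup_(x in ball u n') closed_nbhd x else [set u].

Lemma ball_subS u n : ball u n \subset ball u n.+1.
Proof.
apply/subsetP=> x xB; apply/bigcupP; exists x => //.
by rewrite inE eqxx.
Qed.

Lemma ball_sub u n m : n <= m -> ball u n \subset ball u m.
Proof.
move/subnK <-; elim: (m - n) => [|k IH] //=.
exact: subset_trans IH (ball_subS _ _).
Qed.

Lemma path_last_in_ball u s : path band_rel u s -> last u s \in ball u (size s).
Proof.
elim/last_ind: s => [|s y IH]; first by rewrite inE.
rewrite rcons_path last_rcons size_rcons => /andP[/IH last_in step].
by apply/bigcupP; exists (last u s); rewrite // inE step orbT.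
Qed.

Lemma card_ball u n D : (forall x, #|closed_nbhd x| <= D) -> #|ball u n| <= D ^ n.
Proof.
move=> leD; elim: n => [|n IH] /=; first by rewrite cards1.
apply: leq_trans (card_bigcup_le _ _) _.
apply: leq_trans (_ : \sum_(x in ball u n) D <= _); first exact: leq_sum.
by rewrite sum_nat_const expnS mulnC leq_mul.
Qed.

End BandGraph.

Section AddBandEdge.
Variables (C B : finType) (G : {set C * B}) (g : nat) (u : C) (b0 : B).
Local Notation G' := ((u, b0) |: G).

Lemma band_rel_setU1_off :
  {in [pred x | x != inr b0] &, band_rel G' =2 band_rel G}.
Proof.
move=> [j|b] [j'|b'] //=; rewrite !inE /= xpair_eqE.
  by move=> _; rewrite (inj_eq inr_inj) => /negbTE->; rewrite andbF.
by rewrite (inj_eq inr_inj) => /negbTE-> _; rewrite andbF.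
Qed.

(* A closed walk through the new edge (u, b0), rotated to start at b0, is a walk
   of G from u to b0 closed up by that edge. *)
Lemma band_girth_setU1 : band_girth_at_least G g ->
  (forall s, path (band_rel G) (inl u) s -> last (inl u) s = inr b0 -> g <= (size s).+1) ->
  band_girth_at_least G' g.
Proof.
move=> girthG far w size_w cyc_w count_w has_band nb_w.
have [b0_w|b0_w] := boolP (inr b0 \in w); last first.
  apply: girthG => //; rewrite -(eq_in_cycle band_rel_setU1_off) //.
  by apply/allP=> x x_w; rewrite inE; apply: contraNneq b0_w => <-.
have [i s' rot_w] := rot_to b0_w.
have size_s' : size w = (size s').+1 by rewrite -(size_rot i) rot_w.
have cyc' : cycle (band_rel G') (inr b0 :: s') by rewrite -rot_w rot_cycle.
have count' : count_mem (inr b0) (inr b0 :: s') <= 1.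
  have /permP count_rot : perm_eq (rot i w) w by rewrite perm_rot.
  by rewrite -rot_w count_rot count_w.
case: s' rot_w size_s' cyc' count' => [|[jx|bx] s] rot_w size_s' //=.
rewrite eqxx add1n ltnS leqn0 rcons_path => /and3P[jx_b0 path' last_b0] /eqP count_s.
have b0_s : all [pred z | z != inr b0] (inl jx :: s).
  apply/allP=> z z_s; rewrite inE; apply: contraTneq z_s => ->.
  by rewrite -has_pred1 has_count /= count_s.
rewrite (eq_in_path band_rel_setU1_off) // in path'.
have jx_jy := nb_w i b0 (inl jx) s rot_w.
case jy_def: (last (inl jx) s) last_b0 jx_jy => [jy|b] //=.
move: jx_b0; rewrite !in_setU1 !xpair_eqE eqxx !andbT.
case: (eqVneq jx u) => [jx_u|jx_u]; case: (eqVneq jy u) => [jy_u|jy_u] //= jx_b0 jy_b0.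
- by rewrite jx_u jy_u eqxx.
- move=> _; have := far (rcons s (inr b0)).
  by rewrite rcons_path -jx_u path' jy_def /= jy_b0 last_rcons size_rcons size_s'; apply.
- move=> _; have rev_path' : path (band_rel G) (inl u) (rev (belast (inl jx) s)).
    rewrite -jy_u -jy_def rev_path (eq_path (e' := band_rel G)) // => x y.
    exact: band_rel_sym.
  have := far (rcons (rev (belast (inl jx) s)) (inr b0)).
  rewrite rcons_path rev_path' last_rcons size_rcons size_rev size_belast size_s'; apply => //.
  case: s {path' b0_s rev_path' rot_w size_s' count_s} jy_def => [[jx_jy]|z s _] /=.
    by rewrite jx_jy jy_u eqxx in jx_u.
  by rewrite rev_cons last_rcons.
- move=> _; apply: girthG => //; rewrite -(rot_cycle i) rot_w /= rcons_path jx_b0 path' /=.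
  by rewrite jy_def.
Qed.

End AddBandEdge.

Section DenseBandGraph.
Variables (Pt : finType) (g M T : nat).
Local Notation N := #|Pt|.
Local Notation band_graph := {set 'I_M * (Pt * 'I_T)}.

Definition band_deg (G : band_graph) (b : Pt * 'I_T) := #|[set j | (j, b) \in G]|.

(* At most one band per copy and point: a copy of p sits at a single level. *)
Definition admissible (G : band_graph) : Prop :=
  [/\ forall j p t t', (j, (p, t)) \in G -> (j, (p, t')) \in G -> t = t',
      forall b, band_deg G b <= N &
      band_girth_at_least G g].

Lemma band_girth_set0 : band_girth_at_least (set0 : band_graph) g.
Proof.
move=> w _ cyc_w _ [b b_w] _.
by have := next_cycle cyc_w b_w; case: (next w (inr b)) => [j|b'] /=; rewrite ?inE.
Qed.

Lemma admissible_set0 : admissible set0.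
Proof.
split=> [j p t t'|b|]; rewrite ?inE //; last exact: band_girth_set0.
by rewrite /band_deg (_ : [set j | _] = set0) ?cards0 //; apply/setP=> j; rewrite !inE.
Qed.

Lemma card_closed_nbhd_admissible G x :
  admissible G -> #|closed_nbhd G x| <= N + 1.
Proof.
case=> one_level deg_le _; rewrite card_set_sum; case: x => [j|b].
- rewrite (_ : [set j' | _] = [set j]); last by apply/setP=> j'; rewrite !inE /= orbb eq_sym.
  rewrite cards1 addnC leq_add2r.
  have level_inj :
      {in [set b | inr b \in closed_nbhd G (inl j)] &, injective (@fst Pt 'I_T)}.
    move=> [p t] [p' t']; rewrite !inE /= => jt jt' /= eq_p; subst p'.
    by rewrite (one_level _ _ _ _ jt jt').
  by rewrite -(card_in_imset level_inj) max_card.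
- rewrite (_ : [set b' | _] = [set b]); last first.
    by apply/setP=> b'; rewrite !inE /= orbF (inj_eq inr_inj).
  rewrite cards1 leq_add2r; apply: leq_trans (deg_le b).
  by apply: subset_leq_card; apply/subsetP=> j; rewrite !inE.
Qed.

Lemma admissible_setU1 G u p t :
  admissible G -> (forall t', (u, (p, t')) \notin G) -> band_deg G (p, t) < N ->
  inr (p, t) \notin ball G (inl u) g -> admissible ((u, (p, t)) |: G).
Proof.
case=> one_level deg_le girthG no_level deg_lt far; split.
- move=> j p' t1 t2; rewrite !in_setU1.
  have [[-> -> ->]|_] /= := eqVneq (j, (p', t1)) (u, (p, t)).
    have [[->]|_] //= := eqVneq (u, (p, t2)) (u, (p, t)).
    by move=> _ jt2; move: (no_level t2); rewrite jt2.
  have [[-> -> ->] jt1|_] //= := eqVneq (j, (p', t2)) (u, (p, t)).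
    by move: (no_level t1); rewrite jt1.
  exact: one_level.
- move=> b; have [->|b_ne] := eqVneq b (p, t).
    apply: leq_trans (_ : #|u |: [set j | (j, (p, t)) \in G]| <= _).
      by apply: subset_leq_card; apply/subsetP=> j; rewrite !inE xpair_eqE eqxx andbT.
    by apply: leq_trans (leq_card_setU _ _) _; rewrite cards1 add1n.
  rewrite /band_deg (_ : [set j | _] = [set j | (j, b) \in G]) ?deg_le //.
  by apply/setP=> j; rewrite !inE xpair_eqE (negbTE b_ne) andbF.
- apply: band_girth_setU1 => // s path_s last_s.
  rewrite leqNgt; apply: contra far => short; rewrite -last_s.
  apply: subsetP (ball_sub _ _ _) _ (path_last_in_ball path_s).
  by rewrite ltnW // ltnW.
Qed.

Definition level_count (G : band_graph) (p : Pt) := \sum_t band_deg G (p, t).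

Lemma band_deg_sum G b : band_deg G b = \sum_j ((j, b) \in G).
Proof. by rewrite /band_deg -sum1dep_card big_mkcond. Qed.

Lemma card_band_graph (G : band_graph) : #|G| = \sum_p level_count G p.
Proof.
rewrite /level_count pair_big (card_fibers snd) /=; apply: eq_bigr => -[p t] _.
have inj_pair : injective (fun j : 'I_M => (j, (p, t))) by move=> j j' [].
rewrite /band_deg -(card_imset _ inj_pair); apply: eq_card => -[j b].
rewrite !inE /=; apply/andP/imsetP => [[jb /eqP eq_b]|[j' jb [-> ->]]]; last by rewrite inE in jb.
by subst b; exists j; rewrite ?inE.
Qed.

Section Maximal.
Hypothesis M_le : M <= 2 * (N * (T - (N + 1) ^ g)).

Lemma maximal_admissible_level_count (G : band_graph) p :
  admissible G -> (forall G', admissible G' -> #|G'| <= #|G|) -> M <= 2 * level_count G p.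
Proof.
move=> admG maxG.
have [all_levels|] := boolP [forall j, [exists t, (j, (p, t)) \in G]].
  apply: (@leq_trans (level_count G p)); last by rewrite leq_pmull.
  rewrite /level_count.
  rewrite (eq_bigr _ (fun t _ => band_deg_sum G (p, t))) exchange_big /=.
  rewrite -[M in M <= _]card_ord -sum1_card; apply: leq_sum => j _.
  have /existsP[t jt] := forallP all_levels j.
  by rewrite (bigD1 t) //= jt.
rewrite negb_forall => /existsP[u]; rewrite negb_exists => /forallP no_level.
pose U := [set t | band_deg G (p, t) < N].
have U_near t : t \in U -> inr (p, t) \in ball G (inl u) g.
  rewrite inE => deg_lt; apply/negPn/negP => far.
  have := maxG _ (admissible_setU1 admG no_level deg_lt far).
  by rewrite cardsU1 (negbTE (no_level t)) add1n ltnn.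
have card_U : #|U| <= (N + 1) ^ g.
  apply: leq_trans (card_ball _ _ (fun x => card_closed_nbhd_admissible x admG)).
  have inj_band : injective (fun t : 'I_T => inr (p, t) : 'I_M + (Pt * 'I_T)) by move=> t t' [].
  rewrite -(card_imset _ inj_band); apply: subset_leq_card.
  by apply/subsetP=> _ /imsetP[t tU ->]; exact: U_near.
have saturated : N * (T - #|U|) <= level_count G p.
  rewrite /level_count (bigID (mem U)) /= addnC; apply: leq_trans (leq_addr _ _).
  apply: leq_trans (_ : \sum_(t | t \notin U) N <= _); last first.
    by apply: leq_sum => t; rewrite inE -leqNgt.
  rewrite sum_nat_cond_const mulnC leq_mul2r -[T in T - _]card_ord -(cardsC U) addKn.
  by apply/orP; right; apply: subset_leq_card; apply/subsetP=> t; rewrite !inE.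
apply: leq_trans M_le _; rewrite leq_mul2l; apply/orP; right.
by apply: leq_trans saturated; rewrite leq_mul2l leq_sub2l ?orbT.
Qed.

Lemma exists_dense_admissible : exists2 G, admissible G & N * M <= 2 * #|G|.
Proof.
have [G admG maxG] := ex_maxcard_set admissible_set0.
exists G => //; rewrite card_band_graph big_distrr /=.
apply: leq_trans (_ : \sum_(p : Pt) M <= _).
  by rewrite sum_nat_const.
by apply: leq_sum => p _; exact: maximal_admissible_level_count.
Qed.

End Maximal.

End DenseBandGraph.

Lemma eq_digits k a b c d :
  b < k -> d < k -> (a * k + b == c * k + d) = (a == c) && (b == d).
Proof.
move=> b_lt d_lt; apply/eqP/andP => [eq_abcd|[/eqP-> /eqP->]] //.
have k_gt0 : 0 < k by apply: leq_ltn_trans b_lt.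
have := congr1 (divn^~ k) eq_abcd; rewrite /= !divnMDl // !divn_small // !addn0 => eq_ac.
by move: eq_abcd; rewrite eq_ac => /addnI->.
Qed.

Lemma in_block_div d m n : 0 < d -> (m * d <= n <= m * d + d - 1) = (n %/ d == m).
Proof.
move=> d_gt0; rewrite -leq_divRL //.
have -> : (n <= m * d + d - 1) = (n %/ d < m.+1) by rewrite ltn_divLR // mulSn; lia.
by rewrite ltnS -eqn_leq eq_sym.
Qed.

Record config := Config {
  Pts : finType; Rects : finType;
  px : Pts -> nat; py : Pts -> nat;
  rx1 : Rects -> nat; rx2 : Rects -> nat; ry1 : Rects -> nat; ry2 : Rects -> nat }.

Definition incident (C : config) (p : Pts C) (r : Rects C) : bool :=
  (rx1 r <= px p <= rx2 r) && (ry1 r <= py p <= ry2 r).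

Definition config_rel (C : config) : rel (Pts C + Rects C) := fun x y =>
  match x, y with
  | inl p, inr r | inr r, inl p => incident p r
  | _, _ => false
  end.
Arguments config_rel {C}.

Definition config_edges (C : config) := #|[set x : Pts C * Rects C | incident x.1 x.2]|.

Record good_config (C : config) (W g : nat) : Prop := GoodConfig {
  py_inj : injective (@py C);
  px_lt : forall p : Pts C, px p < W;
  rx2_lt : forall r : Rects C, rx2 r < W;
  rx_le : forall r : Rects C, rx1 r <= rx2 r;
  ry_le : forall r : Rects C, ry1 r <= ry2 r;
  bounds_inj : injective (fun r : Rects C => (rx1 r, rx2 r, ry1 r, ry2 r));
  config_girth : girth_at_least (@config_rel C) g }.

Section Step.
Variables (C : config) (W M T g : nat) (G : {set 'I_M * (Pts C * 'I_T)}).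
Hypotheses (M_gt0 : 0 < M) (goodC : good_config C W g).
Hypothesis one_level : forall j p t t', (j, (p, t)) \in G -> (j, (p, t')) \in G -> t = t'.

Definition level_of (j : 'I_M) (p : Pts C) : nat :=
  if [pick t | (j, (p, t)) \in G] is Some t then val t else T.

Lemma level_of_le j p : level_of j p <= T.
Proof. by rewrite /level_of; case: pickP => [t _|_] //; exact: ltnW (ltn_ord t). Qed.

Lemma level_ofE j p (t : 'I_T) : (level_of j p == t) = ((j, (p, t)) \in G).
Proof.
rewrite /level_of; case: pickP => [t' jt'|no_t].
  by apply/eqP/idP => [/val_inj <- //|jt]; rewrite (one_level jt' jt).
by rewrite no_t; apply/negbTE; rewrite neq_ltn ltn_ord orbT.
Qed.

(* A refined
   y-coordinate has three digits: the old y-coordinate, the level of the band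
   the point joins (T if none) and the copy index.  An old rectangle covers all
   refined values of its old y-range, a band all copies at a single level. *)
Definition step_px (x : 'I_M * Pts C) := px x.2 + x.1 * W.
Definition step_py (x : 'I_M * Pts C) := (py x.2 * T.+1 + level_of x.1 x.2) * M + x.1.
Definition step_rx1 (r : ('I_M * Rects C) + (Pts C * 'I_T)) :=
  if r is inl (j, r0) then rx1 r0 + j * W else 0.
Definition step_rx2 (r : ('I_M * Rects C) + (Pts C * 'I_T)) :=
  if r is inl (j, r0) then rx2 r0 + j * W else M * W.
Definition step_ry1 (r : ('I_M * Rects C) + (Pts C * 'I_T)) :=
  match r with
  | inl (_, r0) => ry1 r0 * (T.+1 * M)
  | inr (p, t) => (py p * T.+1 + t) * M
  end.
Definition step_ry2 (r : ('I_M * Rects C) + (Pts C * 'I_T)) :=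
  match r with
  | inl (_, r0) => ry2 r0 * (T.+1 * M) + T.+1 * M - 1
  | inr (p, t) => (py p * T.+1 + t) * M + M - 1
  end.

Definition step_config : config :=
  @Config ('I_M * Pts C)%type (('I_M * Rects C) + (Pts C * 'I_T))%type
    step_px step_py step_rx1 step_rx2 step_ry1 step_ry2.

Lemma step_py_divM j p : step_py (j, p) %/ M = py p * T.+1 + level_of j p.
Proof. by rewrite /step_py divnMDl // divn_small // addn0. Qed.

Lemma step_py_div_block j p : step_py (j, p) %/ (T.+1 * M) = py p.
Proof.
rewrite /step_py mulnDl -mulnA -addnA divnMDl ?muln_gt0 // divn_small ?addn0 //.
have : level_of j p * M <= T * M by rewrite leq_mul2r level_of_le orbT.
by have := ltn_ord j; rewrite mulSn /=; lia.
Qed.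

Lemma step_py_in_block a b j p :
  (a * (T.+1 * M) <= step_py (j, p) <= b * (T.+1 * M) + T.+1 * M - 1) = (a <= py p <= b).
Proof.
have K_gt0 : 0 < T.+1 * M by rewrite muln_gt0.
rewrite -leq_divRL // step_py_div_block; congr (_ && _).
have -> : (step_py (j, p) <= b * (T.+1 * M) + T.+1 * M - 1) = (step_py (j, p) < b.+1 * (T.+1 * M)).
  by rewrite mulSn; lia.
by rewrite -ltn_divLR // step_py_div_block ltnS.
Qed.

Lemma in_shifted_interval (j j' : 'I_M) x a b : x < W -> a <= b -> b < W ->
  (a + j' * W <= x + j * W <= b + j' * W) = (j == j') && (a <= x <= b).
Proof.
move=> x_lt a_le_b b_lt; have [<-|] := eqVneq j j'; first by rewrite !leq_add2r.
rewrite neq_ltn => /orP[lt_jj'|lt_j'j]; apply/negbTE.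
  have : x + j * W < a + j' * W.
    by have : (j : nat) < j' := lt_jj'; nia.
  by rewrite ltnNge => /negbTE->.
have : b + j' * W < x + j * W.
  by have : (j' : nat) < j := lt_j'j; nia.
by rewrite ltnNge => /negbTE->; rewrite andbF.
Qed.

Lemma shifted_lt (j : 'I_M) x : x < W -> x + j * W < M * W.
Proof. by move=> x_lt; have := ltn_ord j; nia. Qed.

Lemma incident_step_copy (j : 'I_M) p (j' : 'I_M) r :
  @incident step_config (j, p) (inl (j', r)) = (j == j') && incident p r.
Proof.
rewrite /incident /= /step_px /= -/(step_py (j, p)) step_py_in_block.
by rewrite in_shifted_interval ?(px_lt goodC) ?(rx_le goodC) ?(rx2_lt goodC) // -!andbA.
Qed.

Lemma incident_step_band (j : 'I_M) p p' (t : 'I_T) :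
  @incident step_config (j, p) (inr (p', t)) = (p == p') && ((j, (p, t)) \in G).
Proof.
rewrite /incident /= /step_px /= -/(step_py (j, p)).
have -> : px p + j * W <= M * W by rewrite ltnW // shifted_lt // (px_lt goodC).
rewrite in_block_div // step_py_divM eq_digits ?ltnS ?level_of_le //; last exact: ltnW.
by rewrite (inj_eq (py_inj goodC)) level_ofE.
Qed.

Lemma card_step_Pts : #|Pts step_config| = M * #|Pts C|.
Proof. by rewrite /= card_prod card_ord. Qed.

Lemma card_step_Rects : #|Rects step_config| = M * #|Rects C| + #|Pts C| * T.
Proof. by rewrite /= card_sum !card_prod !card_ord. Qed.

Lemma config_edges_step : M * config_edges C + #|G| <= config_edges step_config.
Proof.
pose f1 (z : 'I_M * (Pts C * Rects C)) : Pts step_config * Rects step_config :=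
  ((z.1, z.2.1), inl (z.1, z.2.2)).
pose f2 (z : 'I_M * (Pts C * 'I_T)) : Pts step_config * Rects step_config :=
  ((z.1, z.2.1), inr z.2).
have f1_inj : injective f1 by move=> [j [p r]] [j' [p' r']] [-> -> _ ->].
have f2_inj : injective f2 by move=> [j [p t]] [j' [p' t']] [-> -> _ ->].
pose A1 := setX [set: 'I_M] [set x : Pts C * Rects C | incident x.1 x.2].
have -> : M * config_edges C = #|f1 @: A1| by rewrite card_imset // cardsX cardsT card_ord.
rewrite -(card_imset G f2_inj).
have disj : [disjoint f1 @: A1 & f2 @: G].
  rewrite -setI_eq0; apply/eqP/setP=> x; rewrite !inE.
  by apply/negP=> /andP[/imsetP[[j1 [p1 r1]] _ ->] /imsetP[[j2 [p2 t2]] _]].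
have := (leq_card_setU (f1 @: A1) (f2 @: G)).2; rewrite disj => /eqP <-.
apply: subset_leq_card; apply/subsetP=> x /setUP[] /imsetP[[j [p b]] jpb ->]; rewrite inE.
  by move: jpb; rewrite !inE /= incident_step_copy eqxx.
by rewrite /= incident_step_band eqxx.
Qed.

Definition band_proj (x : Pts step_config + Rects step_config) : 'I_M + (Pts C * 'I_T) :=
  match x with
  | inl (j, _) | inr (inl (j, _)) => inl j
  | inr (inr b) => inr b
  end.

Definition is_band (x : Pts step_config + Rects step_config) :=
  if x is inr (inr _) then true else false.

(* The copy and the underlying vertex of an element of a copy; junk on bands. *)
Definition copy_of (x : Pts step_config + Rects step_config) : 'I_M :=
  match x with
  | inl (j, _) | inr (inl (j, _)) => j
  | inr (inr _) => Ordinal M_gt0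
  end.

Definition copy_proj (x : Pts step_config + Rects step_config) : Pts C + Rects C :=
  match x with
  | inl (_, p) | inr (inr (p, _)) => inl p
  | inr (inl (_, r)) => inr r
  end.

Lemma step_rel_band_rel x y :
  config_rel x y -> band_rel G (band_proj x) (band_proj y).
Proof.
case: x => [[j p]|[[j r]|[p t]]]; case: y => [[j' p']|[[j' r']|[p' t']]] //=.
- by rewrite incident_step_copy => /andP[].
- by rewrite incident_step_band => /andP[/eqP<-].
- by rewrite incident_step_copy eq_sym => /andP[].
- by rewrite incident_step_band => /andP[/eqP<-].
Qed.

Lemma step_rel_off_bands x y : ~~ is_band x -> ~~ is_band y -> config_rel x y ->
  copy_of x = copy_of y /\ config_rel (copy_proj x) (copy_proj y).
Proof.
case: x => [[j p]|[[j r]|[p t]]]; case: y => [[j' p']|[[j' r']|[p' t']]] //= _ _.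
  by rewrite incident_step_copy => /andP[/eqP-> ->].
by rewrite incident_step_copy => /andP[/eqP-> ->].
Qed.

Lemma path_same_copy x s : path config_rel x s -> all (predC is_band) (x :: s) ->
  all (fun y => copy_of y == copy_of x) s.
Proof.
elim: s x => [|y s IH] x //= /andP[xy path_s] /and3P[x_nb y_nb s_nb].
have [-> _] := step_rel_off_bands x_nb y_nb xy; rewrite eqxx /=.
by apply: sub_all (IH _ path_s _) => [z /eqP->|] //=; rewrite y_nb.
Qed.

(* Both neighbours of a band on a cycle are copies of the same point, hence
   lie in different copies. *)
Lemma step_band_nonbacktracking Z : uniq Z -> 3 <= size Z ->
  cycle (@config_rel step_config) Z -> band_nonbacktracking (map band_proj Z).
Proof.
move=> uniqZ sizeZ cycZ k b x s; rewrite -map_rot.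
move: (rot_uniq k Z) (rot_cycle k (@config_rel step_config) Z) (size_rot k Z).
rewrite uniqZ cycZ; case: (rot k Z) => [|z0 [|z1 [|y s']]] //= uniq' cyc' size';
  try by rewrite -size' in sizeZ.
move: cyc' uniq' => /and3P[z0z1 _]; rewrite rcons_path => /andP[_ lastz0] /and3P[_ z1_s' _].
case: z0 z0z1 lastz0 => [[j0 p0]|[[j0 r0]|[pb tb]]] //= z0z1 lastz0 [_ <- <-] {x s}.
case: z1 z0z1 z1_s' => [[j1 p1]|[[j1 r1]|b1]] //=.
rewrite incident_step_band => /andP[/eqP p1_pb _] z1_s'; rewrite last_map.
case last_def: (last y s') (mem_last y s') lastz0 => [[j2 p2]|[[j2 r2]|b2]] //= last_s'.
rewrite incident_step_band => /andP[/eqP p2_pb _].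
by apply: contra z1_s' => /eqP[j1_j2]; rewrite j1_j2 p1_pb -p2_pb.
Qed.

Hypothesis girthG : band_girth_at_least G g.

Lemma step_band_cycle_long Z : uniq Z -> 3 <= size Z -> cycle config_rel Z ->
  has is_band Z -> g <= size Z.
Proof.
move=> uniqZ sizeZ cycZ bandZ; rewrite -(size_map band_proj); apply: girthG.
- by rewrite size_map.
- by rewrite cycle_map; apply: sub_cycle cycZ => x y; exact: step_rel_band_rel.
- move=> b; rewrite count_map (eq_count (a2 := pred1 (inr (inr b)))).
    by rewrite count_uniq_mem // leq_b1.
  by case=> [[j p]|[[j r]|b']].
- case/hasP: bandZ => -[[j p]|[[j r]|b]] // bZ _; exists b.
  by apply/mapP; exists (inr (inr b)).
- exact: step_band_nonbacktracking.
Qed.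

Lemma step_copy_cycle_long Z : uniq Z -> 3 <= size Z -> cycle config_rel Z ->
  ~~ has is_band Z -> g <= size Z.
Proof.
case: Z => [|z0 Z'] // uniqZ sizeZ cycZ; rewrite -all_predC => no_band.
pose same_copy y := ~~ is_band y && (copy_of y == copy_of z0).
have all_same : all same_copy (z0 :: Z').
  move: no_band => /= /andP[z0_nb Z'_nb].
  have := path_same_copy cycZ; rewrite /= !all_rcons /= z0_nb Z'_nb eqxx => /(_ isT) Z'_z0.
  rewrite /same_copy /= z0_nb eqxx; apply/allP=> y yZ'.
  by have := allP Z'_nb _ yZ'; rewrite (allP Z'_z0 _ yZ') andbT.
have off_bands :
    {in same_copy &, forall x y, config_rel x y -> config_rel (copy_proj x) (copy_proj y)}.
  by move=> x y /andP[x_nb _] /andP[y_nb _] /(step_rel_off_bands x_nb y_nb)[].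
rewrite -(size_map copy_proj); apply: (config_girth goodC).
- rewrite (map_inj_in_uniq (f := copy_proj)) // => x y xZ yZ.
  have /andP[+ /eqP+] := allP all_same x xZ; have /andP[+ /eqP+] := allP all_same y yZ.
  by case: x {xZ} => [[j p]|[[j r]|b]]; case: y {yZ} => [[j' p']|[[j' r']|b']] //= _ -> _ -> [->].
- by rewrite size_map.
- by rewrite cycle_map; apply: (sub_in_cycle off_bands all_same).
Qed.

Lemma step_girth : girth_at_least (@config_rel step_config) g.
Proof.
move=> Z uniqZ sizeZ cycZ; have [bandZ|no_band] := boolP (has is_band Z).
  exact: step_band_cycle_long.
exact: step_copy_cycle_long.
Qed.

Lemma step_py_inj : injective step_py.
Proof.
move=> [j p] [j' p'] /eqP; rewrite /step_py /= eq_digits // => /andP[/eqP eq_hi /eqP eq_j].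
move/eqP: eq_hi; rewrite eq_digits ?ltnS ?level_of_le // => /andP[/eqP/(py_inj goodC)-> _].
by rewrite (val_inj eq_j).
Qed.

Lemma step_bounds_inj :
  injective (fun r => (step_rx1 r, step_rx2 r, step_ry1 r, step_ry2 r)).
Proof.
have K_gt0 : 0 < T.+1 * M by rewrite muln_gt0.
have rx1_lt r0 : rx1 r0 < W := leq_ltn_trans (rx_le goodC r0) (rx2_lt goodC r0).
move=> [[j r]|[p t]] [[j' r']|[p' t']] /= [].
- move=> /eqP ex1 /eqP ex2 /eqP ey1 ey2.
  move: ex1; rewrite addnC [rx1 r' + _]addnC eq_digits ?rx1_lt //.
  move=> /andP[/eqP/val_inj eq_j /eqP ex1]; subst j'.
  move: ex2 ey1; rewrite eqn_add2r eqn_pmul2r // => /eqP ex2 /eqP ey1.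
  have ey2' : ry2 r = ry2 r'.
    by apply/eqP; rewrite -(eqn_pmul2r K_gt0); apply/eqP; lia.
  by have -> // : r = r'; apply: (bounds_inj goodC); rewrite /= ex1 ex2 ey1 ey2'.
- by move=> _ ex2; have := shifted_lt j (rx2_lt goodC r); rewrite ex2 ltnn.
- by move=> _ ex2; have := shifted_lt j' (rx2_lt goodC r'); rewrite -ex2 ltnn.
- have [t_le t'_le] := (ltnW (ltn_ord t), ltnW (ltn_ord t')).
  move=> /eqP; rewrite eqn_pmul2r // eq_digits ?ltnS //.
  by case/andP=> /eqP/(py_inj goodC)-> /eqP/val_inj->.
Qed.

Lemma good_step_config : good_config step_config (M * W).+1 g.
Proof.
split; [exact: step_py_inj| | | | |exact: step_bounds_inj|exact: step_girth].
- by move=> [j p]; rewrite ltnS ltnW // shifted_lt // (px_lt goodC).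
- by move=> [[j r]|[p t]] //=; rewrite ltnS ltnW // shifted_lt // (rx2_lt goodC).
- by move=> [[j r]|[p t]] //=; rewrite leq_add2r (rx_le goodC).
- move=> [[j r]|[p t]] /=; last by lia.
  have K_gt0 : 0 < T.+1 * M by rewrite muln_gt0.
  have : ry1 r * (T.+1 * M) <= ry2 r * (T.+1 * M) by rewrite leq_mul2r (ry_le goodC) orbT.
  lia.
Qed.

End Step.

Definition base_config : config :=
  @Config 'I_2 'I_1 (fun p => p) (fun p => p) (fun _ => 0) (fun _ => 0) (fun _ => 0) (fun _ => 0).

Lemma good_base_config g : good_config base_config 2 g.
Proof.
split=> //; [exact: val_inj | exact: ltn_ord | by move=> r r' _; rewrite !ord1 |].
move=> Z uniqZ sizeZ cycZ.
have p1_Z : inl (Ordinal (isT : 1 < 2)) \in Z.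
  apply: contraTT sizeZ => p1_Z; rewrite -leqNgt.
  have : #|Z| <= #|predC1 (inl (Ordinal (isT : 1 < 2)) : Pts base_config + Rects base_config)|.
    by apply: subset_leq_card; apply/subsetP=> x xZ; rewrite inE; apply: contraNneq p1_Z => <-.
  by rewrite cardC1 card_sum !card_ord (card_uniqP uniqZ).
by have := next_cycle cycZ p1_Z; case: (next Z _).
Qed.

Lemma config_edges_base : 1 <= config_edges base_config.
Proof. by rewrite card_gt0; apply/set0Pn; exists (ord0, ord0); rewrite inE. Qed.

(* N points become M * N points, with M = N * T copies and T = 2 (N + 1)^g. *)
Fixpoint npoints (g d : nat) : nat :=
  if d is d'.+1 then npoints g d' * (npoints g d' * (2 * (npoints g d' + 1) ^ g)) else 2.

Lemma exists_iterated_config g d : exists C W,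
  [/\ good_config C W g, #|Pts C| = npoints g d, 2 ^ d.+1 <= #|Pts C|,
      2 ^ d * #|Rects C| + #|Pts C| <= 2 ^ d.+1 * #|Pts C| &
      d.+1 * #|Pts C| <= 2 * config_edges C].
Proof.
elim: d => [|d [C [W [goodC card_Pts pow_le card_Rects edgesC]]]].
  exists base_config, 2; split; rewrite /= ?card_ord //; first exact: good_base_config.
  by have := config_edges_base; lia.
set N := #|Pts C| in card_Pts pow_le card_Rects edgesC *.
have N_gt0 : 0 < N by apply: leq_trans pow_le; rewrite expn_gt0.
set T := 2 * (N + 1) ^ g; set M := N * T.
have T_ge2 : 2 <= T by rewrite /T -[2]muln1 leq_mul2l expn_gt0 addn1.
have M_gt0 : 0 < M by rewrite muln_gt0 N_gt0 ltnW.
have M_le : M <= 2 * (N * (T - (N + 1) ^ g)).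
  by rewrite /M /T mulnCA; have -> : 2 * (N + 1) ^ g - (N + 1) ^ g = (N + 1) ^ g by lia.
have [G [one_level _ girthG] dense] := exists_dense_admissible M_le.
exists (step_config W G), (M * W).+1; split.
- exact: good_step_config.
- by rewrite card_step_Pts -/N /= -card_Pts /M /T mulnC.
- rewrite card_step_Pts expnS; apply: leq_mul => //.
  by have := leq_mul N_gt0 T_ge2.
- rewrite card_step_Pts card_step_Rects -/N -/M !expnS in pow_le card_Rects *.
  have : M * (2 ^ d * #|Rects C| + N) <= M * (2 * 2 ^ d * N) by rewrite leq_mul2l card_Rects orbT.
  have : M * (2 * 2 ^ d) <= M * N by rewrite leq_mul2l pow_le orbT.
  by lia.
- have := config_edges_step M_gt0 goodC one_level.
  have : M * (d.+1 * N) <= M * (2 * config_edges C) by rewrite leq_mul2l edgesC orbT.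
  by rewrite card_step_Pts -/N; lia.
Qed.

Lemma npoints_ge2 g d : 2 <= npoints g d.
Proof.
elim: d => [|d IH] //=; have := expn_gt0 (npoints g d + 1) g; rewrite addn1 /=.
by nia.
Qed.

Lemma double_npoints_le g d : 2 * npoints g d <= npoints g d.+1.
Proof.
have := npoints_ge2 g d; have := expn_gt0 (npoints g d + 1) g; rewrite addn1 /=.
by nia.
Qed.

Lemma npoints_gt g d : d < npoints g d.
Proof. by elim: d => [|d IH] //; have := double_npoints_le g d; lia. Qed.

Lemma npoints_lt_pow g d : npoints g d < 4 ^ ((g + 3) ^ d).
Proof.
elim: d => [|d IH] //=; set N := npoints g d in IH *.
apply: (@leq_trans ((N + 1) ^ (g + 3))); last first.
  by rewrite expnSr expnM leq_exp2r ?addn1 // addn3.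
have X_gt0 : 0 < (N + 1) ^ g by rewrite expn_gt0 addn1.
rewrite expnD (_ : (N + 1) ^ 3 = N * N * N + 3 * (N * N) + 3 * N + 1); last first.
  by rewrite !expnS expn0; lia.
by nia.
Qed.

Lemma exists_npoints_bracket g m : 4 <= m ->
  exists d, 2 * npoints g d <= m < 2 * npoints g d.+1.
Proof.
move=> m_ge4; have ex0 : exists d, 2 * npoints g d <= m by exists 0.
have bounded d : 2 * npoints g d <= m -> d <= m.
  by have := npoints_gt g d; lia.
have [d le_m max_d] := ex_maxnP ex0 bounded; exists d; rewrite le_m ltnNge /=.
by apply/negP => le_m'; have := max_d d.+1 le_m'; rewrite ltnn.
Qed.

Lemma exists_copies C W g q : 0 < q -> good_config C W g -> exists C' W',
  [/\ good_config C' W' g, #|Pts C'| = q * #|Pts C|, #|Rects C'| = q * #|Rects C| &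
      q * config_edges C <= config_edges C'].
Proof.
move=> q_gt0 goodC; pose G0 := set0 : {set 'I_q * (Pts C * 'I_0)}.
have one_level j p (t t' : 'I_0) : (j, (p, t)) \in G0 -> (j, (p, t')) \in G0 -> t = t'.
  by rewrite inE.
exists (step_config W G0), (q * W).+1; split.
- by apply: good_step_config q_gt0 goodC one_level _; exact: band_girth_set0.
- exact: card_step_Pts.
- by rewrite card_step_Rects muln0 addn0.
- by have := config_edges_step q_gt0 goodC one_level; rewrite cards0 addn0.
Qed.

Lemma exists_sized_config g n : 3 <= n -> exists d C W,
  [/\ good_config C W g, #|Pts C| <= n, #|Rects C| <= n,
      n * d.+1 <= 8 * config_edges C & n < 2 * npoints g d.+1].
Proof.
move=> n_ge3; have [d /andP[le_n1 n1_lt]] := exists_npoints_bracket g (n_ge3 : 4 <= n.+1).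
have [C [W [goodC card_Pts pow_le card_Rects edgesC]]] := exists_iterated_config g d.
set N := #|Pts C| in card_Pts pow_le card_Rects edgesC.
have R_lt : #|Rects C| < 2 * N.
  have : 0 < 2 ^ d by rewrite expn_gt0.
  by rewrite expnS in card_Rects; nia.
have N2_gt0 : 0 < 2 * N by rewrite card_Pts; have := npoints_ge2 g d; lia.
set q := n.+1 %/ (2 * N).
have q_gt0 : 0 < q by rewrite divn_gt0 // card_Pts.
have q_le : q * (2 * N) <= n.+1 := leq_divM _ _.
have q_gt : n.+1 < (q + 1) * (2 * N) by rewrite addn1 ltn_ceil.
have [C' [W' [goodC' card_Pts' card_Rects' edgesC']]] := exists_copies q_gt0 goodC.
exists d, C', W'; split=> //; rewrite ?card_Pts' ?card_Rects' -?card_Pts.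
- by nia.
- by nia.
- have : q * (d.+1 * N) <= q * (2 * config_edges C) by rewrite leq_mul2l edgesC orbT.
  by nia.
- exact: ltnW n1_lt.
Qed.

Lemma lt_npoints_pow g d n : n < 2 * npoints g d -> n < 2 ^ (3 * (g + 3) ^ d).
Proof.
have := npoints_lt_pow g d; set L := (g + 3) ^ d => lt_L lt_n.
have L_gt0 : 0 < L by rewrite expn_gt0 addn3.
have two_le : 2 <= 2 ^ L by rewrite -{1}(expn1 2) leq_exp2l.
rewrite expnM (_ : 2 ^ 3 = 2 * 4) // expnMn.
have : 2 * 4 ^ L <= 2 ^ L * 4 ^ L by rewrite leq_mul2r two_le orbT.
lia.
Qed.

Lemma girth_at_least_pullback (T U : finType) (e : rel T) (e' : rel U) (h : T -> option U) g :
  (forall x y, e x y -> exists x' y', [/\ h x = Some x', h y = Some y' & e' x' y']) ->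
  (forall x y u, h x = Some u -> h y = Some u -> x = y) ->
  girth_at_least e' g -> girth_at_least e g.
Proof.
move=> h_rel h_inj girth' [|z0 Z] // uniqZ sizeZ cycZ.
have h_def x : x \in z0 :: Z -> exists u, h x = Some u.
  by move=> /(next_cycle cycZ) /h_rel[x' [y' [hx _ _]]]; exists x'.
have [u0 _] := h_def z0 (mem_head _ _).
pose h' x := odflt u0 (h x).
have h'E x : x \in z0 :: Z -> h x = Some (h' x) by move=> /h_def[u hx]; rewrite /h' hx.
rewrite -(size_map h'); apply: girth'.
- rewrite (map_inj_in_uniq (f := h')) // => x y xZ yZ eq_xy.
  by apply: (h_inj x y (h' x)); [|rewrite eq_xy]; exact: h'E.
- by rewrite size_map.
- rewrite cycle_map; apply: (sub_in_cycle (P := mem (z0 :: Z))) cycZ => [x y xZ yZ xy|].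
    have [x' [y' [hx hy]]] := h_rel _ _ xy.
    by rewrite /= /h' hx hy.
  exact/allP.
Qed.

Section Enumeration.
Variables (T : finType) (n : nat).

Definition nth_elem (i : 'I_n) : option T :=
  omap enum_val (insub (val i) : option 'I_#|T|).

Lemma nth_elem_inj i i' x : nth_elem i = Some x -> nth_elem i' = Some x -> i = i'.
Proof.
rewrite /nth_elem; case: insubP => [k _ k_i|] //; case: insubP => [k' _ k'_i'|] //= [<-] [].
by move/enum_val_inj => eq_k; apply: val_inj; rewrite -k_i -k'_i' eq_k.
Qed.

Hypothesis card_T : #|T| <= n.

Lemma nth_elem_rank x : nth_elem (widen_ord card_T (enum_rank x)) = Some x.
Proof.
rewrite /nth_elem; case: insubP => [k _ k_x|] /=; last by rewrite ltn_ord.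
by congr Some; rewrite -[RHS](enum_rankK x); congr enum_val; exact: val_inj.
Qed.

End Enumeration.

Open Scope R_scope.

Lemma Rltb_true x y : x < y -> Rltb x y = true.
Proof. by rewrite /Rltb; case: Rlt_dec. Qed.

Lemma Rltb_false x y : ~ x < y -> Rltb x y = false.
Proof. by rewrite /Rltb; case: Rlt_dec. Qed.

Lemma Rltb_double_sub1 (a x : nat) : Rltb (2 * INR a - 1) (2 * INR x) = (a <= x)%N.
Proof.
have [le_ax|lt_xa] := leqP a x.
  by apply: Rltb_true; have := le_INR _ _ (elimT leP le_ax); lra.
by apply: Rltb_false; have := le_INR _ _ (elimT leP lt_xa); rewrite S_INR; lra.
Qed.

Lemma Rltb_double_add1 (x c : nat) : Rltb (2 * INR x) (2 * INR c + 1) = (x <= c)%N.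
Proof.
have [le_xc|lt_cx] := leqP x c.
  by apply: Rltb_true; have := le_INR _ _ (elimT leP le_xc); lra.
by apply: Rltb_false; have := le_INR _ _ (elimT leP lt_cx); rewrite S_INR; lra.
Qed.

Lemma open_interval_inj a c a' c' : a < c -> a' < c' ->
  (forall x, a < x < c <-> a' < x < c') -> a = a' /\ c = c'.
Proof.
move=> lt_ac lt_ac' same.
have eq_a : a = a'.
  case: (Rtotal_order a a') => [lt|[//|lt]].
    have := same ((a + Rmin a' c) / 2); have := Rmin_l a' c; have := Rmin_r a' c.
    have : a < Rmin a' c by apply: Rmin_glb_lt.
    lra.
  have := same ((a' + Rmin a c') / 2); have := Rmin_l a c'; have := Rmin_r a c'.
  have : a' < Rmin a c' by apply: Rmin_glb_lt.
  lra.
split=> //; case: (Rtotal_order c c') => [lt|[//|lt]].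
  have := same ((c' + Rmax c a') / 2); have := Rmax_l c a'; have := Rmax_r c a'.
  have : Rmax c a' < c' by apply: Rmax_lub_lt.
  lra.
have := same ((c + Rmax c' a) / 2); have := Rmax_l c' a; have := Rmax_r c' a.
have : Rmax c' a < c by apply: Rmax_lub_lt.
lra.
Qed.

Lemma in_rect_inj a c b d a' c' b' d' : a < c -> b < d -> a' < c' -> b' < d' ->
  (forall p, in_rect p (a, c, b, d) <-> in_rect p (a', c', b', d')) ->
  (a, c, b, d) = (a', c', b', d').
Proof.
move=> lt_ac lt_bd lt_ac' lt_bd' same.
have [-> ->] : a = a' /\ c = c'.
  apply: open_interval_inj => // x; have := same (x, (b + d) / 2); rewrite /in_rect /=.
  have := same ((a + c) / 2, (b + d) / 2); rewrite /in_rect /=; lra.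
have [-> ->] // : b = b' /\ d = d'.
apply: open_interval_inj => // y; have := same ((a + c) / 2, y); rewrite /in_rect /=.
have := same ((a + c) / 2, (b + d) / 2); rewrite /in_rect /=; lra.
Qed.

Section Realization.
Variables (C : config) (W g n : nat).
Hypotheses (goodC : good_config C W g).

(* Unused indices become points on the
   x-axis right of every rectangle, and pairwise distinct empty rectangles in
   the strip -1 < x < 0 below the x-axis. *)
Definition real_point (i : 'I_n) : point :=
  if nth_elem (Pts C) i is Some p then (2 * INR (px p), 2 * INR (py p))
  else (2 * INR W + 2 * INR i, 0).

Definition real_rect (j : 'I_n) : rectangle :=
  if nth_elem (Rects C) j is Some r then
    (2 * INR (rx1 r) - 1, 2 * INR (rx2 r) + 1, 2 * INR (ry1 r) - 1, 2 * INR (ry2 r) + 1)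
  else (-1, 0, -2 * INR j - 3, -2 * INR j - 2).

Lemma in_real_rect i j : in_rectb (real_point i) (real_rect j) =
  if (nth_elem (Pts C) i, nth_elem (Rects C) j) is (Some p, Some r) then incident p r
  else false.
Proof.
rewrite /real_point /real_rect /in_rectb.
case: (nth_elem _ i) => [p|]; case: (nth_elem _ j) => [r|] /=.
- by rewrite !Rltb_double_sub1 !Rltb_double_add1 /incident andbA.
- by rewrite (@Rltb_false (2 * INR (px p)) 0) ?andbF //; have := pos_INR (px p); lra.
- rewrite (@Rltb_false (2 * INR W + 2 * INR i) (2 * INR (rx2 r) + 1)) ?andbF //.
  have := le_INR _ _ (elimT leP (rx2_lt goodC r)); have := pos_INR i; rewrite S_INR; lra.
- rewrite (@Rltb_false (2 * INR W + 2 * INR i) 0) ?andbF //.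
  by have := pos_INR i; have := pos_INR W; lra.
Qed.

Lemma real_points_distinct : distinct_points real_point.
Proof.
move=> i1 i2; rewrite /real_point.
case E1: (nth_elem _ i1) => [p1|]; case E2: (nth_elem _ i2) => [p2|] eq_pt;
  move: (congr1 fst eq_pt) (congr1 snd eq_pt) => /= ex ey.
- have /(py_inj goodC) eq_p : py p1 = py p2 by apply: INR_eq; lra.
  by subst p2; exact: nth_elem_inj E1 E2.
- by have := lt_INR _ _ (elimT ltP (px_lt goodC p1)); have := pos_INR i2; lra.
- by have := lt_INR _ _ (elimT ltP (px_lt goodC p2)); have := pos_INR i1; lra.
- by apply: ord_inj; apply: INR_eq; lra.
Qed.

Lemma real_rect_bounds (r : Rects C) :
  2 * INR (rx1 r) - 1 < 2 * INR (rx2 r) + 1 /\ 2 * INR (ry1 r) - 1 < 2 * INR (ry2 r) + 1.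
Proof.
have := le_INR _ _ (elimT leP (rx_le goodC r)); have := le_INR _ _ (elimT leP (ry_le goodC r)).
lra.
Qed.

Lemma real_rects_distinct : distinct_rects real_rect.
Proof.
move=> j1 j2; rewrite /real_rect.
case E1: (nth_elem _ j1) => [r1|]; case E2: (nth_elem _ j2) => [r2|] same.
- have [? ?] := real_rect_bounds r1; have [? ?] := real_rect_bounds r2.
  apply in_rect_inj in same; try lra; case: same => ex1 ex2 ey1 ey2.
  suff eq_r : r1 = r2 by subst r2; exact: nth_elem_inj E1 E2.
  by apply: (bounds_inj goodC); congr (_, _, _, _); apply: INR_eq; lra.
- have [? ?] := real_rect_bounds r1; have := pos_INR j2; have := pos_INR (ry1 r1).
  by apply in_rect_inj in same; try lra; case: same; lra.
- have [? ?] := real_rect_bounds r2; have := pos_INR j1; have := pos_INR (ry1 r2).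
  by apply in_rect_inj in same; try lra; case: same; lra.
- apply in_rect_inj in same; try lra; case: same => ey1 _.
  by apply: ord_inj; apply: INR_eq; lra.
Qed.

Definition vertex_of (x : 'I_n + 'I_n) : option (Pts C + Rects C) :=
  match x with
  | inl i => omap inl (nth_elem _ i)
  | inr j => omap inr (nth_elem _ j)
  end.

Lemma real_girth : girth_at_least (incidence_rel real_point real_rect) g.
Proof.
apply: (girth_at_least_pullback (h := vertex_of) _ _ (config_girth goodC)).
  case=> [i|j] [i'|j'] //=; rewrite in_real_rect.
    case: (nth_elem _ i) => [p|] //; case: (nth_elem _ j') => [r|] // pr.
    by exists (inl p), (inr r).
  case: (nth_elem _ i') => [p|] //; case: (nth_elem _ j) => [r|] // pr.
  by exists (inr r), (inl p).
case=> [i|j] [i'|j'] u /=.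
- case E1: (nth_elem _ i) => [p|] //; case E2: (nth_elem _ i') => [p'|] //= [<-] [eq_p].
  by subst p'; rewrite (nth_elem_inj E1 E2).
- by case: (nth_elem _ i) => [p|] //; case: (nth_elem _ j') => [r|] //= [<-].
- by case: (nth_elem _ j) => [r|] //; case: (nth_elem _ i') => [p|] //= [<-].
- case E1: (nth_elem _ j) => [r|] //; case E2: (nth_elem _ j') => [r'|] //= [<-] [eq_r].
  by subst r'; rewrite (nth_elem_inj E1 E2).
Qed.

Hypotheses (card_Pts : (#|Pts C| <= n)%N) (card_Rects : (#|Rects C| <= n)%N).

Lemma real_edges : (config_edges C <= incidence_edges real_point real_rect)%N.
Proof.
pose f (x : Pts C * Rects C) : 'I_n * 'I_n :=
  (widen_ord card_Pts (enum_rank x.1), widen_ord card_Rects (enum_rank x.2)).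
have f_inj : injective f.
  by move=> [p r] [p' r'] [/ord_inj/enum_rank_inj-> /ord_inj/enum_rank_inj->].
rewrite /config_edges -(card_imset _ f_inj); apply: subset_leq_card.
apply/subsetP=> _ /imsetP[[p r] pr ->]; rewrite !inE /= in pr *.
by rewrite in_real_rect !nth_elem_rank.
Qed.

End Realization.

Lemma INR_expn (m k : nat) : INR (m ^ k)%N = INR m ^ k.
Proof. by elim: k => [|k IH] //=; rewrite expnS mult_INR IH. Qed.

Lemma ln_1_plus_lt y : 0 < y -> ln (1 + y) < y.
Proof.
move=> y_gt0; rewrite -[X in _ < X]ln_exp; apply: ln_increasing; first lra.
by apply: exp_ineq1; lra.
Qed.

Lemma ln_ln_le_of_lt_pow (n b k : nat) : (3 <= n)%N -> (1 < b)%N -> (0 < k)%N ->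
  (n < 2 ^ (3 * b ^ k))%N -> ln (ln (INR n)) <= INR k * (2 + ln (INR b)).
Proof.
move=> n_ge3 b_gt1 k_gt0 n_lt.
have n_gt1 : 1 < INR n by have := le_INR 3 n (elimT leP n_ge3); rewrite /=; lra.
have ln_n_gt0 : 0 < ln (INR n) by rewrite -ln_1; apply: ln_increasing; lra.
have B_ge1 : 1 <= INR (b ^ k) by apply: (le_INR 1); apply/leP; rewrite expn_gt0 ltnW.
have ln2_lt1 : ln 2 < 1 by have := ln_1_plus_lt Rlt_0_1; rewrite (_ : 1 + 1 = 2); lra.
have ln3_lt2 : ln 3 < 2 by have := ln_1_plus_lt Rlt_0_2; rewrite (_ : 1 + 2 = 3); lra.
have ln_n_lt : ln (INR n) < 3 * INR (b ^ k).
  have := lt_INR _ _ (elimT ltP n_lt); rewrite INR_expn (_ : INR 2 = 2) => [lt_pow|]; last first.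
    by rewrite /=; lra.
  have := ln_increasing _ _ (Rlt_trans _ _ _ Rlt_0_1 n_gt1) lt_pow.
  rewrite ln_pow ?mult_INR; last lra.
  rewrite (_ : INR 3 = 3); last by rewrite /=; lra.
  by have := ln_lt_2; nra.
have := ln_increasing _ _ ln_n_gt0 ln_n_lt.
have b_gt1' : 1 < INR b by have := lt_INR 1 b (elimT ltP b_gt1); rewrite /=.
have ln_b_gt0 : 0 < ln (INR b) by rewrite -ln_1; apply: ln_increasing; lra.
have k_ge1 : 1 <= INR k by apply: (le_INR 1); apply/leP.
have pow_pos : 0 < INR b ^ k by apply: pow_lt; lra.
rewrite ln_mult ?INR_expn ?ln_pow ?Rmult_plus_distr_l; lra.
Qed.

Lemma scaled_ln_ln_le (n k E : nat) (K : R) : 0 < K ->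
  ln (ln (INR n)) <= INR k * K -> (n * k <= 8 * E)%N ->
  / (8 * K) * INR n * ln (ln (INR n)) <= INR E.
Proof.
move=> K_gt0 lnln_le; move/leP/le_INR; rewrite !mult_INR (_ : INR 8 = 8); last by rewrite /=; lra.
move=> nk_le; rewrite Rmult_assoc; apply: (Rle_trans _ (/ (8 * K) * (INR n * (INR k * K)))).
  apply: Rmult_le_compat_l; first by left; apply: Rinv_0_lt_compat; lra.
  by apply: Rmult_le_compat_l => //; exact: pos_INR.
rewrite (_ : / (8 * K) * (INR n * (INR k * K)) = INR n * INR k / 8); last by field; lra.
lra.
Qed.

Unset Implicit Arguments.

Theorem theorem5p3 (g : nat) (hg : (0 < g)%N) :
  exists c : R, 0 < c /\
    forall n : nat, (3 <= n)%N ->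
      exists (P : 'I_n -> point) (Q : 'I_n -> rectangle),
        distinct_points P /\ distinct_rects Q /\
        girth_at_least (incidence_rel P Q) g /\
        c * INR n * ln (ln (INR n)) <= INR (incidence_edges P Q).
Proof.
pose K := 2 + ln (INR (g + 3)).
have K_gt0 : 0 < K.
  suff : 0 < ln (INR (g + 3)) by rewrite /K; lra.
  rewrite -ln_1; apply: ln_increasing; first lra.
  by rewrite plus_INR /=; have := pos_INR g; lra.
exists (/ (8 * K)); split=> [|n n_ge3]; first by apply: Rinv_0_lt_compat; lra.
have [d [C [W [goodC card_Pts card_Rects edges_n n_lt]]]] := exists_sized_config g n_ge3.
exists (@real_point C W n), (@real_rect C n).
split; first exact: real_points_distinct goodC.
split; first exact: real_rects_distinct goodC.
split; first exact: real_girth goodC.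
have lnln_le : ln (ln (INR n)) <= INR d.+1 * K.
  exact: ln_ln_le_of_lt_pow n_ge3 (ltn_addl g (isT : (1 < 3)%N)) (ltn0Sn d) (lt_npoints_pow n_lt).
apply: scaled_ln_ln_le K_gt0 lnln_le _.
apply: leq_trans edges_n _.
by rewrite leq_mul2l (real_edges goodC card_Pts card_Rects) orbT.
Qed.
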